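(* For all reals $x\ge D\ge 0$, \[ \sum_{d\le \min(D,\,x/10^{12})}\frac{\mu^2(d)\varphi(d)}{d^{2}\log(x/d)^2}\,g_1(d)^2\le 0.047. \]
   Context: $\mu$ is the Möbius function, $\varphi$ Euler's totient, $d$ ranges over positive integers (an empty sum is $0$). Let $\xi=1-1/(12\log 10)$. $g_1$ is the multiplicative function defined on primes by $g_1(2)=2.06$ and $g_1(p)=p^\xi/(p^\xi-1)$ for $p\ge 3$. *)

From Stdlib Require Import Reals.
From mathcomp Require Import all_boot.

Open Scope R_scope.

Definition Rleb (a b : R) : bool := if Rle_dec a b then true else false.

(* Möbius function: mu(n) = (-1)^k if n > 0 is squarefree with k prime
   factors, 0 otherwise (and mu(0) = 0 by convention, never used). *)
Definition mobius (n : nat) : R :=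
  if (0 < n)%N && all (fun p => logn p n == 1)%N (primes n)
  then (-1) ^ size (primes n) else 0.

Definition phiR (n : nat) : R := INR (totient n).

Definition xi : R := 1 - 1 / (12 * ln 10).

Definition g1p (p : nat) : R :=
  if p == 2%N then 206 / 100
  else Rpower (INR p) xi / (Rpower (INR p) xi - 1).

(* Multiplicative extension of g1: g1(n) = prod_{p^k || n} g1(p)^k.
   (Only squarefree arguments matter in the theorem, because of mu^2.) *)
Definition g1 (n : nat) : R :=
  \big[Rmult/1]_(p <- primes n) (g1p p ^ logn p n).

Definition term (x : R) (d : nat) : R :=
  (mobius d) ^ 2 * phiR d / ((INR d) ^ 2 * (ln (x / INR d)) ^ 2) * (g1 d) ^ 2.

(* Sum over positive integers d <= M; the range bound Z.to_nat (up M)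
   exceeds every integer d <= M, and the filter selects exactly d in [1, M]. *)
Definition sum_upto (M : R) (F : nat -> R) : R :=
  \big[Rplus/0]_(d < Z.to_nat (up M) | (0 < d)%N && Rleb (INR d) M) F d.

From Stdlib Require Import Reals Lra Lia Psatz ZArith.
From HB Require Import structures.
From mathcomp Require Import all_boot zify.
Open Scope R_scope.

(* For squarefree [d] the summand is [W(d) / (d log(x/d)^2)] with [W]
   multiplicative, [W(p) = (1 - 1/p) g1(p)^2], and [log(x/d) >= 12 log 10]
   because [d <= x / 10^12].  Let [W_P] agree with [W] at primes [<= P] and be
   [1] at larger primes.  Passing from [W_(p-1)] to [W_p] for a prime [p >= 5]
   adds at most [(W(p) - 1)/p] times the old sum taken at scale [x/p], so the
   bound gets multiplied by [1 + (W(p) - 1)/p].  The weight [W_4] is periodic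
   mod 36, and its sum telescopes along residue classes mod 36 thanks to
   [36 / (m log(x/m)^2) <= 1/log(x/m) - 1/log(x/(m - 36))],
   giving [(sum of W_4 over a period) / (36 * 12 log 10)].  The Euler product
   over [p >= 5] is evaluated for [p < 50] and bounded through
   [sum p^(-1 - xi)] beyond. *)

HB.instance Definition _ := Monoid.isComLaw.Build R 0 Rplus
  (fun a b c => esym (Rplus_assoc a b c)) Rplus_comm Rplus_0_l.
HB.instance Definition _ := Monoid.isComLaw.Build R 1 Rmult
  (fun a b c => esym (Rmult_assoc a b c)) Rmult_comm Rmult_1_l.
HB.instance Definition _ := Monoid.isMulLaw.Build R 0 Rmult Rmult_0_l Rmult_0_r.
HB.instance Definition _ :=
  Monoid.isAddLaw.Build R Rmult Rplus Rmult_plus_distr_r Rmult_plus_distr_l.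

Lemma Rdiv_le_of_le_mul a b c : 0 < c -> a <= b * c -> a / c <= b.
Proof.
  move=> hc h; apply: (Rmult_le_reg_r c) => //.
  by rewrite /Rdiv Rmult_assoc Rinv_l; lra.
Qed.

Lemma Rle_div_of_mul_le a b c : 0 < c -> a * c <= b -> a <= b / c.
Proof.
  move=> hc h; apply: (Rmult_le_reg_r c) => //.
  by rewrite /Rdiv Rmult_assoc Rinv_l; lra.
Qed.

Lemma exp_le_exp x y : x <= y -> exp x <= exp y.
Proof. by case=> [h | ->]; [left; apply: exp_increasing | right]. Qed.

Lemma ln_le_ln x y : 0 < x -> x <= y -> ln x <= ln y.
Proof. by move=> hx [h | ->]; [left; apply: ln_increasing | right]. Qed.

Lemma ln_ge0 x : 1 <= x -> 0 <= ln x.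
Proof. by move=> hx; rewrite -ln_1; apply: ln_le_ln; lra. Qed.

Lemma ln_div a b : 0 < a -> 0 < b -> ln (a / b) = ln a - ln b.
Proof.
  move=> ha hb; have hib := Rinv_0_lt_compat b hb.
  by rewrite /Rdiv ln_mult // ln_Rinv.
Qed.

(* [1 + u <= exp u] at [u = ln (s/t)]. *)
Lemma ln_sub_ge s t : 0 < s -> s <= t -> (t - s) / t <= ln t - ln s.
Proof.
  move=> hs hst; have ht : 0 < t by lra.
  have := exp_ineq1_le (ln (s / t)).
  rewrite exp_ln; last exact: Rdiv_lt_0_compat.
  rewrite ln_div // (_ : (t - s) / t = 1 - s / t); first lra.
  by field; lra.
Qed.

Lemma exp_mul_INR (n : nat) t : exp (INR n * t) = exp t ^ n.
Proof.
  elim: n => [|n IH]; first by rewrite /= Rmult_0_l exp_0.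
  by rewrite S_INR Rmult_plus_distr_r Rmult_1_l exp_plus IH /=; ring.
Qed.

(* [exp (t/n) <= 1 / (1 - t/n)], raised to the [n]-th power. *)
Lemma exp_le_ratio_pow (n : nat) t : 0 <= t -> t < INR n ->
  exp t <= (INR n / (INR n - t)) ^ n.
Proof.
  move=> ht htn; have hn : 0 < INR n by lra.
  have -> : exp t = exp (t / INR n) ^ n by rewrite -exp_mul_INR; f_equal; field; lra.
  apply: pow_incr; split; first exact: Rlt_le (exp_pos _).
  have hu : 0 < 1 - t / INR n.
  { by rewrite (_ : 1 - t / INR n = (INR n - t) / INR n); [apply: Rdiv_lt_0_compat; lra | field; lra]. }
  have := exp_ineq1_le (- (t / INR n)); rewrite exp_Ropp => h.
  have he := exp_pos (t / INR n).
  rewrite (_ : INR n / (INR n - t) = / (1 - t / INR n)); last by field; lra.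
  rewrite -(Rinv_inv (exp _)); apply: Rinv_le_contravar => //; lra.
Qed.

Lemma ratio_pow_le_IZR (a b c : Z) (n : nat) : (0 < b)%Z ->
  (a ^ Z.of_nat n <= c * b ^ Z.of_nat n)%Z -> (IZR a / IZR b) ^ n <= IZR c.
Proof.
  move=> hb h; have hbR : 0 < IZR b by apply: IZR_lt.
  rewrite /Rdiv Rpow_mult_distr pow_inv !pow_IZR.
  have hbn : 0 < IZR (b ^ Z.of_nat n) by apply: IZR_lt; apply: Z.pow_pos_nonneg; lia.
  apply: Rdiv_le_of_le_mul => //; rewrite -mult_IZR; apply: IZR_le; lia.
Qed.

Lemma IZR_le_ratio_pow (a b c : Z) (n : nat) : (0 < b)%Z ->
  (c * b ^ Z.of_nat n <= a ^ Z.of_nat n)%Z -> IZR c <= (IZR a / IZR b) ^ n.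
Proof.
  move=> hb h; have hbR : 0 < IZR b by apply: IZR_lt.
  rewrite /Rdiv Rpow_mult_distr pow_inv !pow_IZR.
  have hbn : 0 < IZR (b ^ Z.of_nat n) by apply: IZR_lt; apply: Z.pow_pos_nonneg; lia.
  apply: Rle_div_of_mul_le => //; rewrite -mult_IZR; apply: IZR_le; lia.
Qed.

Lemma sum_nat_le (a b : nat) (F G : nat -> R) :
  (forall i, (a <= i < b)%N -> F i <= G i) ->
  \big[Rplus/0]_(a <= i < b) F i <= \big[Rplus/0]_(a <= i < b) G i.
Proof.
  move=> h; rewrite big_nat_cond [X in _ <= X]big_nat_cond.
  apply: (big_ind2 (fun x y => x <= y)); [lra | move=> *; lra |].
  by move=> i /andP [hi _]; apply: h.
Qed.

Lemma sum_nat_ge0 (a b : nat) (F : nat -> R) :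
  (forall i, (a <= i < b)%N -> 0 <= F i) -> 0 <= \big[Rplus/0]_(a <= i < b) F i.
Proof.
  move=> h; rewrite big_nat_cond.
  apply: (big_ind (fun x => 0 <= x)); [lra | move=> *; lra |].
  by move=> i /andP [hi _]; apply: h.
Qed.

Lemma sum_nat_recr (a b : nat) (F : nat -> R) : (a <= b)%N ->
  \big[Rplus/0]_(a <= i < b.+1) F i = \big[Rplus/0]_(a <= i < b) F i + F b.
Proof. by move=> h; rewrite big_nat_recr. Qed.

Lemma INR_gt0 (m : nat) : (0 < m)%N -> 0 < INR m.
Proof. by move=> h; apply: (lt_INR 0); apply/ltP. Qed.

Lemma INR_leq (m n : nat) : (m <= n)%N -> INR m <= INR n.
Proof. by move/leP; apply: le_INR. Qed.

Lemma one_sub_inv_ge0 t : 1 <= t -> 0 <= 1 - / t.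
Proof.
  move=> ht; suff : / t <= 1 by lra.
  by rewrite -Rinv_1; apply: Rinv_le_contravar; lra.
Qed.

Definition logT : R := 12 * ln 10.

Lemma ln_T : ln (10 ^ 12) = logT.
Proof. by rewrite ln_pow /logT; [rewrite INR_IZR_INZ /=; ring | lra]. Qed.

(* [exp (9/4) <= (256/247)^64 <= 10]. *)
Lemma logT_ge : 27 <= logT.
Proof.
  suff : 9 / 4 <= ln 10 by rewrite /logT; lra.
  rewrite -(ln_exp (9 / 4)); apply: ln_le_ln; first exact: exp_pos.
  have h64 : INR 64 = 64 by rewrite INR_IZR_INZ.
  have := exp_le_ratio_pow 64 (9 / 4) ltac:(lra) ltac:(lra).
  rewrite h64 (_ : 64 / (64 - 9 / 4) = IZR 256 / IZR 247); last by field.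
  move/Rle_trans; apply.
  by apply: (ratio_pow_le_IZR 256 247 10 64); [lia | by vm_compute].
Qed.

Lemma xi_eq : xi = 1 - / logT.
Proof. by rewrite /xi /logT Rdiv_1_l. Qed.

Lemma xi_ge : 26 / 27 <= xi.
Proof.
  have h := logT_ge; rewrite xi_eq.
  suff : / logT <= / 27 by lra.
  by apply: Rinv_le_contravar; lra.
Qed.

Definition t_eps (t : R) : R := exp (ln t / logT).

Lemma Rpower_xi t : 0 < t -> Rpower t xi = t / t_eps t.
Proof.
  move=> ht; have hL := logT_ge.
  rewrite /Rpower /t_eps xi_eq.
  rewrite (_ : (1 - / logT) * ln t = ln t + - (ln t / logT)); last by field; lra.
  by rewrite exp_plus exp_Ropp exp_ln.
Qed.

Lemma Rpower_neg_xi t : 0 < t -> Rpower t (- xi) = t_eps t / t.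
Proof.
  move=> ht; rewrite Rpower_Ropp Rpower_xi //.
  by rewrite Rinv_div.
Qed.

Lemma t_eps_ge1 t : 1 <= t -> 1 <= t_eps t.
Proof.
  move=> ht; rewrite /t_eps -exp_0; apply: exp_le_exp.
  apply: Rmult_le_pos; first exact: ln_ge0.
  by apply: Rlt_le; apply: Rinv_0_lt_compat; have := logT_ge; lra.
Qed.

Lemma t_eps_lt t : 1 < t -> t_eps t < t.
Proof.
  move=> ht; have hl : 0 < ln t by rewrite -ln_1; apply: ln_increasing; lra.
  rewrite /t_eps -{2}(exp_ln t); last lra.
  apply: exp_increasing; have := logT_ge => hL.
  rewrite /Rdiv -{2}(Rmult_1_r (ln t)); apply: Rmult_lt_compat_l => //.
  rewrite -Rinv_1; apply: Rinv_lt_contravar; lra.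
Qed.

Lemma t_eps_le t B : 1 <= t -> 0 < B -> t <= B ^ 27 -> t_eps t <= B.
Proof.
  move=> ht hB htB; rewrite /t_eps -(exp_ln B hB); apply: exp_le_exp.
  have hl0 := ln_ge0 t ht; have hL := logT_ge.
  have hl : ln t <= 27 * ln B.
  { have := ln_le_ln t _ ltac:(lra) htB.
    by rewrite ln_pow // (INR_IZR_INZ 27). }
  apply: (Rle_trans _ (ln t / 27)); last lra.
  by apply: Rmult_le_compat_l => //; apply: Rinv_le_contravar; lra.
Qed.

Lemma Rpower_xi_gt1 t : 1 < t -> 1 < Rpower t xi.
Proof.
  move=> ht; rewrite Rpower_xi; last lra.
  have := t_eps_lt t ht; have := t_eps_ge1 t ltac:(lra) => h1 h2.
  apply: (Rmult_lt_reg_r (t_eps t)); first lra.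
  by rewrite /Rdiv Rmult_assoc Rinv_l; lra.
Qed.

Lemma Rpower_xi_le t : 1 <= t -> Rpower t xi <= t.
Proof.
  move=> ht; rewrite Rpower_xi; last lra.
  have := t_eps_ge1 t ht => h; apply: Rdiv_le_of_le_mul; nra.
Qed.

Lemma div_t_eps_le_Rpower_xi t b : 1 <= t -> t_eps t <= b -> t / b <= Rpower t xi.
Proof.
  move=> ht hb; have := t_eps_ge1 t ht => h1; rewrite Rpower_xi; last lra.
  by apply: Rmult_le_compat_l; [lra | apply: Rinv_le_contravar; lra].
Qed.

Lemma ratio_pred_antitone a b : 1 < a -> a <= b -> b / (b - 1) <= a / (a - 1).
Proof.
  move=> ha hab; apply: Rdiv_le_of_le_mul; first lra.
  rewrite (_ : a / (a - 1) * (b - 1) = a * (b - 1) / (a - 1)); last by field; lra.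
  by apply: Rle_div_of_mul_le; nra.
Qed.

(* The Euler factor at [p] of [mu^2(d) phi(d) g1(d)^2 / d]. *)
Definition local_factor (p : nat) : R := (1 - / INR p) * g1p p ^ 2.
Definition local_excess (p : nat) : R := local_factor p - 1.

Lemma g1p_odd (p : nat) : p <> 2%N ->
  g1p p = Rpower (INR p) xi / (Rpower (INR p) xi - 1).
Proof. by rewrite /g1p => /eqP/negbTE ->. Qed.

Lemma local_factor_ge0 (p : nat) : (0 < p)%N -> 0 <= local_factor p.
Proof.
  move=> hp; have h1 : 1 <= INR p by apply: (INR_leq 1).
  by apply: Rmult_le_pos; [apply: one_sub_inv_ge0 | apply: pow2_ge_0].
Qed.

Lemma local_factor_2 : local_factor 2 = 21218 / 10000.
Proof. by rewrite /local_factor /g1p /=; field. Qed.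

Lemma local_factor_le (p : nat) (b : R) : (2 < p)%N -> b < INR p ->
  t_eps (INR p) <= b -> local_factor p <= (1 - / INR p) * (INR p / (INR p - b)) ^ 2.
Proof.
  move=> hp hbp hb; have h3 := INR_leq 3 p hp; rewrite (INR_IZR_INZ 3) /= in h3.
  have hb1 := Rle_trans _ _ _ (t_eps_ge1 (INR p) ltac:(lra)) hb.
  rewrite /local_factor g1p_odd; last lia.
  apply: Rmult_le_compat_l; first by apply: one_sub_inv_ge0; lra.
  have hq := div_t_eps_le_Rpower_xi (INR p) b ltac:(lra) hb.
  have hq1 : 1 < INR p / b.
  { apply: (Rmult_lt_reg_r b); first lra.
    by rewrite /Rdiv Rmult_assoc Rinv_l; lra. }
  rewrite (_ : INR p / (INR p - b) = INR p / b / (INR p / b - 1)); last by field; lra.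
  apply: pow_incr; split; first by apply: Rlt_le; apply: Rdiv_lt_0_compat; lra.
  exact: ratio_pred_antitone.
Qed.

Lemma local_excess_ge0 (p : nat) : (2 < p)%N -> 0 <= local_excess p.
Proof.
  move=> hp; have h3 := INR_leq 3 p hp; rewrite (INR_IZR_INZ 3) /= in h3.
  rewrite /local_excess /local_factor g1p_odd; last lia.
  have hq1 := Rpower_xi_gt1 (INR p) ltac:(lra).
  have hqp := Rpower_xi_le (INR p) ltac:(lra).
  set q := Rpower (INR p) xi in hq1 hqp *.
  have hg := ratio_pred_antitone q (INR p) hq1 hqp.
  have hg1 : 1 <= INR p / (INR p - 1) by apply: Rle_div_of_mul_le; lra.
  have hsq : (INR p / (INR p - 1)) ^ 2 <= (q / (q - 1)) ^ 2 by apply: pow_incr; lra.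
  have e : (1 - / INR p) * (INR p / (INR p - 1)) ^ 2 = INR p / (INR p - 1) by field; lra.
  have hpos := one_sub_inv_ge0 (INR p) ltac:(lra).
  have := Rmult_le_compat_l _ _ _ hpos hsq; lra.
Qed.

Lemma local_excess_div_ge0 (p : nat) : (2 < p)%N -> 0 <= local_excess p / INR p.
Proof.
  move=> hp; apply: Rmult_le_pos; first exact: local_excess_ge0.
  by apply: Rlt_le; apply: Rinv_0_lt_compat; apply: INR_gt0; lia.
Qed.

Lemma local_excess_div_le (p : nat) (b : R) : (2 < p)%N -> b < INR p ->
  t_eps (INR p) <= b ->
  local_excess p / INR p <= ((INR p - 1) * INR p - (INR p - b) ^ 2) / (INR p * (INR p - b) ^ 2).
Proof.
  move=> hp hbp hb; have h3 := INR_leq 3 p hp; rewrite (INR_IZR_INZ 3) /= in h3.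
  have := local_factor_le p b hp hbp hb; rewrite /local_excess => h.
  rewrite (_ : ((INR p - 1) * INR p - (INR p - b) ^ 2) / (INR p * (INR p - b) ^ 2)
             = ((1 - / INR p) * (INR p / (INR p - b)) ^ 2 - 1) / INR p); last by field; lra.
  by apply: Rmult_le_compat_r; [apply: Rlt_le; apply: Rinv_0_lt_compat | ]; lra.
Qed.

Lemma local_factor_3_le : local_factor 3 <= 3129 / 2000.
Proof.
  have h3 : INR 3 = 3 by rewrite INR_IZR_INZ.
  have hb : t_eps (INR 3) <= 651 / 625.
  { have h27 : 3 <= (651 / 625) ^ 27.
    { by apply: (IZR_le_ratio_pow 651 625 3 27); [lia | vm_compute]. }
    by apply: t_eps_le; rewrite ?h3; lra. }
  have := local_factor_le 3 (651 / 625) isT ltac:(rewrite h3; lra) hb.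
  rewrite h3; lra.
Qed.

Definition local_weight (P q e : nat) : R :=
  if (q <= P)%N then (if e == 1%N then local_factor q else 0) else 1.

Definition sieve_weight (P m : nat) : R :=
  \big[Rmult/1]_(q <- primes m) local_weight P q (logn q m).

Lemma local_weight_ge0 P q e : prime q -> 0 <= local_weight P q e.
Proof.
  move=> pq; rewrite /local_weight; case: ifP => _; last lra.
  case: ifP => _; last lra.
  exact/local_factor_ge0/prime_gt0.
Qed.

Lemma sieve_weight_ge0 P m : 0 <= sieve_weight P m.
Proof.
  rewrite /sieve_weight big_seq; apply: (big_ind (fun x => 0 <= x)); [lra | | ].
  - by move=> a b ha hb; apply: Rmult_le_pos.
  - by move=> q; rewrite mem_primes => /andP [pq _]; apply: local_weight_ge0.
Qed.

Lemma primes_mul_prime p m : prime p -> ~~ (p %| m) -> (0 < m)%N ->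
  perm_eq (primes (p * m)) (p :: primes m).
Proof.
  move=> pp npm m0; apply: uniq_perm; first exact: primes_uniq.
  - by rewrite /= primes_uniq andbT mem_primes negb_and negb_and npm !orbT.
  - by move=> q; rewrite (primesM _ (prime_gt0 pp) m0) (primes_prime pp) !inE.
Qed.

Lemma sieve_weight_mul_prime P p m : prime p -> ~~ (p %| m) -> (0 < m)%N ->
  sieve_weight P (p * m) = local_weight P p 1 * sieve_weight P m.
Proof.
  move=> pp npm m0; have p0 := prime_gt0 pp.
  have lpm : logn p m = 0%N by apply: logn_coprime; rewrite prime_coprime.
  rewrite /sieve_weight (perm_big _ (primes_mul_prime p m pp npm m0)) big_cons.
  rewrite lognM // logn_prime // eqxx lpm; congr (_ * _).
  apply: eq_big_seq => q qin; rewrite lognM // logn_prime //.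
  suff /negbTE -> : q != p by [].
  by apply: contraNneq npm => <-; move: qin; rewrite mem_primes => /and3P [].
Qed.

Lemma sieve_weight_sq P p m : prime p -> (p <= P)%N -> (p ^ 2 %| m)%N -> (0 < m)%N ->
  sieve_weight P m = 0.
Proof.
  move=> pp pP p2m m0.
  have pin : p \in primes m.
  { by rewrite mem_primes pp m0 (dvdn_trans _ p2m) // dvdn_exp. }
  rewrite /sieve_weight (big_rem _ pin) /= /local_weight pP.
  have : (2 <= logn p m)%N by rewrite -pfactor_dvdn.
  by case: eqP => [-> | _] //; rewrite Rmult_0_l.
Qed.

Lemma sieve_weight_succ P m : P.+1 \notin primes m ->
  sieve_weight P.+1 m = sieve_weight P m.
Proof.
  move=> nP; apply: eq_big_seq => q qin; rewrite /local_weight leq_eqVlt ltnS.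
  suff /negbTE -> : q != P.+1 by [].
  by apply: contraNneq nP => <-.
Qed.

(* Sieving by a new prime [p]: on multiples of [p], [local_factor p] replaces the
   weight [1] of [p]. *)
Lemma sieve_weight_succ_le P m : prime P.+1 -> (2 < P.+1)%N -> (0 < m)%N ->
  sieve_weight P.+1 m <= sieve_weight P m
    + (if (P.+1 %| m)%N then local_excess P.+1 * sieve_weight P (m %/ P.+1) else 0).
Proof.
  set p := P.+1 => pp p2 m0.
  case: (boolP (p %| m)%N) => pm; last first.
  { rewrite sieve_weight_succ; first lra.
    by rewrite mem_primes (negbTE pm) !andbF. }
  have em : m = (p * (m %/ p))%N by rewrite mulnC divnK.
  have m'0 : (0 < m %/ p)%N by rewrite divn_gt0 ?prime_gt0 // dvdn_leq.
  have kp := local_excess_ge0 p p2.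
  case: (boolP (p %| m %/ p)%N) => pm'.
  { have p2m : (p ^ 2 %| m)%N by rewrite em expnS expn1 dvdn_mul.
    rewrite (sieve_weight_sq p p m pp (leqnn p) p2m m0).
    have := sieve_weight_ge0 P m; have := sieve_weight_ge0 P (m %/ p); nra. }
  rewrite {1 2}em !sieve_weight_mul_prime // sieve_weight_succ; last first.
  { by rewrite mem_primes (negbTE pm') !andbF. }
  rewrite /local_weight leqnn eqxx /p ltnn /local_excess; lra.
Qed.

Definition log_weight (y : R) (m : nat) : R := / (INR m * ln (y / INR m) ^ 2).

Lemma log_weight_ge0 y m : 0 <= log_weight y m.
Proof.
  rewrite /log_weight; case: (Rle_lt_or_eq_dec 0 (INR m * ln (y / INR m) ^ 2)).
  - by apply: Rmult_le_pos; [apply: pos_INR | apply: pow2_ge_0].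
  - by move=> h; apply: Rlt_le; apply: Rinv_0_lt_compat.
  - by move=> <-; rewrite Rinv_0; lra.
Qed.

Lemma log_weight_mul y p m : (0 < p)%N -> (0 < m)%N ->
  log_weight y (p * m) = / INR p * log_weight (y / INR p) m.
Proof.
  move=> p0 m0; have hp := INR_gt0 p p0; have hm := INR_gt0 m m0.
  rewrite /log_weight mult_INR (_ : y / (INR p * INR m) = y / INR p / INR m); last by field; lra.
  case: (Req_dec (ln (y / INR p / INR m)) 0) => [-> | e].
  - have -> : INR p * INR m * 0 ^ 2 = 0 by ring.
    have -> : INR m * 0 ^ 2 = 0 by ring.
    by rewrite Rinv_0 Rmult_0_r.
  - by have := pow_nonzero _ 2 e => e2; field; lra.
Qed.

Lemma sum_dvd_reindex p n (G : nat -> R) : (0 < p)%N ->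
  \big[Rplus/0]_(1 <= m < n.+1) (if (p %| m)%N then G (m %/ p)%N else 0)
  = \big[Rplus/0]_(1 <= m < (n %/ p).+1) G m.
Proof.
  move=> p0; elim: n => [|n IH]; first by rewrite div0n !big_geq.
  rewrite big_nat_recr //= IH divnS //.
  case: (p %| n.+1)%N; last by rewrite Rplus_0_r.
  by rewrite [in RHS]big_nat_recr //= add1n -divnS.
Qed.

Definition sieve_sum (P : nat) (y : R) (n : nat) : R :=
  \big[Rplus/0]_(1 <= m < n.+1) (sieve_weight P m * log_weight y m).

Definition euler_factor (P : nat) : R :=
  \big[Rmult/1]_(5 <= p < P.+1 | prime p) (1 + local_excess p / INR p).

Lemma euler_factor_succ P :
  euler_factor P.+1 = euler_factor P *
    (if prime P.+1 && (5 <= P.+1)%N then 1 + local_excess P.+1 / INR P.+1 else 1).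
Proof.
  rewrite /euler_factor; case: (leqP 5 P.+1) => h.
  - by rewrite big_mkcond [in RHS]big_mkcond big_nat_recr //= andbT.
  - by rewrite !big_geq ?andbF ?Rmult_1_r //; lia.
Qed.

Lemma euler_factor_ge1 P : 1 <= euler_factor P.
Proof.
  rewrite /euler_factor big_nat_cond.
  apply: (big_ind (fun x => 1 <= x)); [lra | move=> a b ha hb; nra |].
  move=> p /andP [/andP [h5 _] _].
  by have := local_excess_div_ge0 p ltac:(lia); lra.
Qed.

Lemma euler_factor_mono P Q : (P <= Q)%N -> euler_factor P <= euler_factor Q.
Proof.
  elim: Q => [|Q IH]; first by rewrite leqn0 => /eqP ->; lra.
  rewrite leq_eqVlt ltnS => /orP [/eqP -> | /IH hPQ]; first lra.
  apply: (Rle_trans _ _ _ hPQ); rewrite euler_factor_succ.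
  have := euler_factor_ge1 Q; case: ifP => [/andP [_ h5] | _] h1; last lra.
  by have := local_excess_div_ge0 Q.+1 ltac:(lia); nra.
Qed.

Lemma sieve_sum_succ_nonprime P y n : ~~ prime P.+1 ->
  sieve_sum P.+1 y n = sieve_sum P y n.
Proof.
  move=> np; apply: eq_big_nat => m _; rewrite sieve_weight_succ //.
  by rewrite mem_primes (negbTE np).
Qed.

(* Split off the multiples [m = p m'] of the new prime [p]; they contribute the
   same sum at the scale [y / p]. *)
Lemma sieve_sum_succ_le P y n : prime P.+1 -> (2 < P.+1)%N ->
  sieve_sum P.+1 y n
    <= sieve_sum P y n + local_excess P.+1 / INR P.+1 * sieve_sum P (y / INR P.+1) (n %/ P.+1).
Proof.
  set p := P.+1 => pp p2; have p0 : (0 < p)%N by [].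
  have hp := INR_gt0 p p0; have kp := local_excess_ge0 p p2.
  set G := fun m' => local_excess p * sieve_weight P m' * log_weight y (p * m').
  have -> : local_excess p / INR p * sieve_sum P (y / INR p) (n %/ p)
          = \big[Rplus/0]_(1 <= m < n.+1) (if (p %| m)%N then G (m %/ p)%N else 0).
  { rewrite sum_dvd_reindex // /sieve_sum big_distrr.
    apply: eq_big_nat => m /andP [m1 _].
    by rewrite /G log_weight_mul //=; field; apply: Rgt_not_eq. }
  rewrite /sieve_sum -big_split; apply: sum_nat_le => m /andP [m1 _].
  have hW := sieve_weight_succ_le P m pp p2 m1; have hf := log_weight_ge0 y m.
  rewrite -/p in hW; rewrite /G /=; case: ifP hW => d hW.
  - by rewrite mulnC divnK //; have := Rmult_le_compat_r _ _ _ hf hW; lra.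
  - by rewrite Rplus_0_r; apply: Rmult_le_compat_r => //; lra.
Qed.

Lemma sieve_sum_le_euler_factor (T C : R) : 0 <= T -> 0 <= C ->
  (forall y n, INR n * T <= y -> sieve_sum 4 y n <= C) ->
  forall P, (4 <= P)%N -> forall y n, INR n * T <= y -> sieve_sum P y n <= C * euler_factor P.
Proof.
  move=> hT hC base; elim => [|P IH] // hP y n hy.
  case: (leqP 4 P) => h4; last first.
  { have -> : P.+1 = 4%N by lia.
    by rewrite /euler_factor big_geq // Rmult_1_r; apply: base. }
  rewrite euler_factor_succ; have hK := euler_factor_ge1 P.
  case: (boolP (prime P.+1)) => pp; last first.
  { by rewrite andFb sieve_sum_succ_nonprime // Rmult_1_r; apply: IH. }
  have p5 : (5 <= P.+1)%N by lia.
  rewrite andTb p5; have hp := INR_gt0 P.+1 isT.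
  have hk := local_excess_div_ge0 P.+1 ltac:(lia).
  have hy' : INR (n %/ P.+1) * T <= y / INR P.+1.
  { apply: Rle_div_of_mul_le => //.
    have : INR (n %/ P.+1) * INR P.+1 <= INR n by rewrite -mult_INR; apply/INR_leq/leq_divM.
    by nra. }
  have i1 := IH h4 y n hy; have i2 := IH h4 _ _ hy'.
  have := sieve_sum_succ_le P y n pp ltac:(lia).
  have := Rmult_le_compat_l _ _ _ hk i2; nra.
Qed.

Definition local_weight_dvd (p m : nat) : R :=
  if (p ^ 2 %| m)%N then 0 else if (p %| m)%N then local_factor p else 1.

Lemma local_weight_logn P p m : prime p -> (p <= P)%N -> (0 < m)%N -> (p %| m)%N ->
  local_weight P p (logn p m) = local_weight_dvd p m.
Proof.
  move=> pp pP m0 pm; rewrite /local_weight_dvd /local_weight pP pm pfactor_dvdn //.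
  have : (0 < logn p m)%N by rewrite logn_gt0 mem_primes pp m0 pm.
  by case: (logn p m) => [|[|e]].
Qed.

Lemma local_weight_dvd_ndvd p m : ~~ (p %| m)%N -> local_weight_dvd p m = 1.
Proof.
  move=> npm; rewrite /local_weight_dvd (negbTE npm) ifF //.
  by apply: contraNF npm; apply: dvdn_trans; rewrite dvdn_exp.
Qed.

Lemma local_weight_dvd_period p m k : (p ^ 2 %| k)%N ->
  local_weight_dvd p (m + k) = local_weight_dvd p m.
Proof.
  move=> pk; have p1k : (p %| k)%N by apply: dvdn_trans pk; rewrite dvdn_exp.
  by rewrite /local_weight_dvd !dvdn_addl.
Qed.

Lemma prod_uniq_support23 (s : seq nat) (F : nat -> R) : uniq s ->
  (forall q, q \in s -> q != 2%N -> q != 3%N -> F q = 1) ->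
  \big[Rmult/1]_(q <- s) F q
    = (if 2%N \in s then F 2%N else 1) * (if 3%N \in s then F 3%N else 1).
Proof.
  elim: s => [|x s IH] /=; first by move=> _ _; rewrite big_nil; ring.
  move=> /andP [xs us] hF; rewrite big_cons IH //; last first.
  { by move=> q qs; apply: hF; rewrite in_cons qs orbT. }
  rewrite !in_cons; case: (eqVneq x 2%N) => [ex | nx2].
  { by subst x; rewrite (negbTE xs) /=; ring. }
  case: (eqVneq x 3%N) => [ex | nx3].
  { by subst x; rewrite (negbTE xs) /=; ring. }
  by rewrite hF ?in_cons ?eqxx //=; ring.
Qed.

Lemma sieve_weight4 m : (0 < m)%N ->
  sieve_weight 4 m = local_weight_dvd 2 m * local_weight_dvd 3 m.
Proof.
  move=> m0; rewrite /sieve_weight prod_uniq_support23 ?primes_uniq //; last first.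
  { move=> q; rewrite mem_primes => /and3P [pq _ _] q2 q3.
    rewrite /local_weight ifF //; apply/negbTE; rewrite -ltnNge.
    by case: q q2 q3 pq => [|[|[|[|[|q]]]]]. }
  rewrite !mem_primes m0 /=.
  by congr (_ * _); case: ifP => [d | /negbT d];
    first [rewrite local_weight_logn | rewrite local_weight_dvd_ndvd].
Qed.

Lemma sieve_weight4_period m : (0 < m)%N -> sieve_weight 4 (m + 36) = sieve_weight 4 m.
Proof.
  move=> m0; rewrite !sieve_weight4 ?addn_gt0 ?m0 //.
  by rewrite !local_weight_dvd_period.
Qed.

Lemma sum_window_periodic (k : nat) (F : nat -> R) : (0 < k)%N ->
  (forall m, (0 < m)%N -> F (m + k)%N = F m) ->
  forall a, \big[Rplus/0]_(a.+1 <= m < a + k.+1) F m = \big[Rplus/0]_(1 <= m < k.+1) F m.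
Proof.
  move=> k0 hF; elim => [|a IH] //; rewrite -IH.
  rewrite (_ : (a.+1 + k.+1 = (a + k.+1).+1)%N) ?big_nat_recr /=; try lia.
  rewrite [in RHS]big_ltn; last lia.
  by rewrite (_ : (a + k.+1 = a.+1 + k)%N) ?hF //; [lra | lia].
Qed.

Definition period_sum : R := \big[Rplus/0]_(1 <= m < 37) sieve_weight 4 m.
Definition period_harmonic_sum : R := \big[Rplus/0]_(1 <= m < 37) (sieve_weight 4 m / INR m).

Lemma period_sum_eq : period_sum = (2 + local_factor 2) * (6 + 2 * local_factor 3).
Proof.
  rewrite /period_sum (eq_big_nat _ _ (F2 := fun m => local_weight_dvd 2 m * local_weight_dvd 3 m)).
  - by rewrite /index_iota /= !big_cons big_nil /local_weight_dvd /=; ring.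
  - by move=> m /andP [m1 _]; apply: sieve_weight4.
Qed.

Lemma period_harmonic_sum_eq : period_harmonic_sum =
  300996993816 / 167133741775 + 66771 / 85085 * local_factor 2
    + 184 / 385 * local_factor 3 + 1 / 5 * local_factor 2 * local_factor 3.
Proof.
  rewrite /period_harmonic_sum
    (eq_big_nat _ _ (F2 := fun m => local_weight_dvd 2 m * local_weight_dvd 3 m / INR m)).
  - by rewrite /index_iota /= !big_cons big_nil /local_weight_dvd /=; field.
  - by move=> m /andP [m1 _]; rewrite sieve_weight4.
Qed.

(* [(9/8)^32 >= 36] and [exp (1/8) >= 9/8]. *)
Lemma ln_36_le : ln 36 <= 4.
Proof.
  rewrite -(ln_exp 4); apply: ln_le_ln; first lra.
  have h : 1 + 1 / 8 <= exp (1 / 8) by apply: exp_ineq1_le.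
  rewrite (_ : 4 = INR 32 * (1 / 8)); last by rewrite INR_IZR_INZ /=; lra.
  rewrite exp_mul_INR; apply: (Rle_trans _ ((IZR 9 / IZR 8) ^ 32)).
  - by apply: (IZR_le_ratio_pow 9 8 36 32); [lia | vm_compute].
  - by apply: pow_incr; lra.
Qed.

(* With [u = ln (y/b)] and [D = ln b - ln (b - 36) >= 18/b + 18/(b - 18)], the
   claim reads [36 u (u + D) <= D b u^2]. *)
Lemma inv_ln_gap36 (y b : R) : 37 <= b -> 0 < y -> 27 <= ln (y / b) ->
  36 * / (b * ln (y / b) ^ 2) <= / ln (y / b) - / ln (y / (b - 36)).
Proof.
  move=> hb hy; rewrite !ln_div; try lra.
  set u := ln y - ln b => hu; set D := ln b - ln (b - 36).
  have -> : ln y - ln (b - 36) = u + D by rewrite /u /D; ring.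
  have h1 := ln_sub_ge (b - 18) b ltac:(lra) ltac:(lra).
  have h2 := ln_sub_ge (b - 36) (b - 18) ltac:(lra) ltac:(lra).
  have hD : 18 / b + 18 / (b - 18) <= D.
  { have -> : D = (ln b - ln (b - 18)) + (ln (b - 18) - ln (b - 36)) by rewrite /D; ring.
    have e1 : b - (b - 18) = 18 by ring.
    have e2 : b - 18 - (b - 36) = 18 by ring.
    by rewrite e1 in h1; rewrite e2 in h2; lra. }
  have hD0 : 0 < D.
  { suff : 0 < 18 / b + 18 / (b - 18) by lra.
    by apply: Rplus_lt_0_compat; apply: Rdiv_lt_0_compat; lra. }
  have hpoly : 36 * u <= (18 / b + 18 / (b - 18)) * (b * u - 36).
  { rewrite (_ : (18 / b + 18 / (b - 18)) * (b * u - 36)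
               = 18 * (2 * b - 18) * (b * u - 36) / (b * (b - 18))); last by field; lra.
    apply: Rle_div_of_mul_le; first by apply: Rmult_lt_0_compat; lra.
    have := Rmult_le_pos b (u - 4) ltac:(lra) ltac:(lra).
    have : 18 * (2 * b - 18) * (b * u - 36) - 36 * u * (b * (b - 18))
           = 324 * (b * (u - 4)) + 11664 by ring.
    lra. }
  have hDu : 36 * u <= D * (b * u - 36).
  { have : 0 <= b * u - 36 by nra.
    nra. }
  rewrite (_ : / u - / (u + D) = D / (u * (u + D))); last by field; lra.
  apply: Rdiv_le_of_le_mul; first nra.
  rewrite (_ : D / (u * (u + D)) * (b * u ^ 2) = D * b * u / (u + D)); last by field; lra.
  by apply: Rle_div_of_mul_le; nra.
Qed.

Lemma period_sum_numeric (L : R) : 27 <= L ->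
  36 * L * period_harmonic_sum <= period_sum * (L - 4) ^ 2.
Proof.
  move=> hL; rewrite period_harmonic_sum_eq period_sum_eq local_factor_2.
  have h3 := local_factor_ge0 3 isT; set t := local_factor 3 in h3 *.
  have hq : 19.5 * L <= (L - 4) ^ 2 by nra.
  have hp : 0 <= (2 + 21218 / 10000) * (6 + 2 * t) by nra.
  nra.
Qed.

Definition inv_ln_ratio (y : R) (m : nat) : R := / ln (y / INR m).

Section SieveBySmallPrimes.

Variables (y : R) (n : nat).
Hypothesis hyn : INR n * 10 ^ 12 <= y.
Hypothesis n1 : (1 <= n)%N.

Let y_gt0 : 0 < y.
Proof. by have := INR_leq 1 n n1; rewrite /= => h; nra. Qed.

Lemma logT_le_ln_ratio m : (1 <= m <= n)%N -> logT <= ln (y / INR m).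
Proof.
  move=> /andP [m1 mn]; have hm := INR_gt0 m m1.
  rewrite -ln_T; apply: ln_le_ln; first by apply: pow_lt; lra.
  by apply: Rle_div_of_mul_le => //; have := INR_leq m n mn; nra.
Qed.

Lemma logT_le_ln : logT <= ln y.
Proof. by have := logT_le_ln_ratio 1 ltac:(lia); rewrite /= Rdiv_1_r. Qed.

Lemma ln_ratio_eq m : (0 < m)%N -> ln (y / INR m) = ln y - ln (INR m).
Proof. by move=> m0; apply: ln_div; [exact: y_gt0 | apply: INR_gt0]. Qed.

Lemma log_weight_le_initial m : (1 <= m <= n)%N -> (m <= 36)%N ->
  log_weight y m <= / INR m * / (ln y - 4) ^ 2.
Proof.
  move=> hm m36; have hL := logT_ge; have hl := logT_le_ln.
  have hu := logT_le_ln_ratio m hm; case/andP: hm => m1 _.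
  have hm := INR_gt0 m m1.
  have h4 : ln (INR m) <= 4.
  { apply: (Rle_trans _ (ln 36)); last exact: ln_36_le.
    by apply: ln_le_ln => //; have := INR_leq m 36 m36; rewrite (INR_IZR_INZ 36). }
  rewrite /log_weight ln_ratio_eq // in hu *; rewrite -Rinv_mult.
  apply: Rinv_le_contravar; first by apply: Rmult_lt_0_compat => //; apply: pow_lt; lra.
  by apply: Rmult_le_compat_l; [lra | apply: pow_incr; have := ln_ge0 (INR m); lra].
Qed.

Lemma initial_sum_le k : (k <= 36)%N -> (k <= n)%N ->
  \big[Rplus/0]_(1 <= m < k.+1) (sieve_weight 4 m * log_weight y m)
    <= period_sum / (36 * ln y).
Proof.
  move=> k36 kn; have hL := logT_ge; have hl := logT_le_ln.
  set c := / (ln y - 4) ^ 2; have hc : 0 < c by apply/Rinv_0_lt_compat/pow_lt; lra.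
  apply: (Rle_trans _ (period_harmonic_sum * c)).
  { apply: (Rle_trans _ (\big[Rplus/0]_(1 <= m < 37) (sieve_weight 4 m / INR m * c))).
    - rewrite (@big_cat_nat _ _ _ k.+1 1 37) //=; try lia.
      have : 0 <= \big[Rplus/0]_(k.+1 <= m < 37) (sieve_weight 4 m / INR m * c).
      { apply: sum_nat_ge0 => i /andP [hi _]; apply: Rmult_le_pos; last lra.
        by apply: Rmult_le_pos; [apply: sieve_weight_ge0 | apply/Rlt_le/Rinv_0_lt_compat/INR_gt0; lia]. }
      suff : \big[Rplus/0]_(1 <= m < k.+1) (sieve_weight 4 m * log_weight y m)
          <= \big[Rplus/0]_(1 <= m < k.+1) (sieve_weight 4 m / INR m * c) by lra.
      apply: sum_nat_le => m hm; rewrite /Rdiv Rmult_assoc.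
      apply: Rmult_le_compat_l; first exact: sieve_weight_ge0.
      by apply: log_weight_le_initial; lia.
    - by rewrite /period_harmonic_sum big_distrl; right. }
  have := period_sum_numeric (ln y) ltac:(lra) => h.
  apply: Rle_div_of_mul_le; first lra.
  rewrite /c (_ : period_harmonic_sum * / (ln y - 4) ^ 2 * (36 * ln y)
                = 36 * ln y * period_harmonic_sum / (ln y - 4) ^ 2); last by field; lra.
  by apply: Rdiv_le_of_le_mul => //; apply: pow_lt; lra.
Qed.

Lemma inv_ln_ratio_le m : (1 <= m <= n)%N -> inv_ln_ratio y m <= / logT.
Proof.
  move=> hm; have := logT_le_ln_ratio m hm; have := logT_ge => hL hu.
  by apply: Rinv_le_contravar; lra.
Qed.

Lemma inv_ln_ratio_ge m : (1 <= m <= n)%N -> / ln y <= inv_ln_ratio y m.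
Proof.
  move=> hm; have := logT_le_ln_ratio m hm; have := logT_ge => hL.
  case/andP: hm => m1 _; have := ln_ge0 (INR m) (INR_leq 1 m m1).
  rewrite /inv_ln_ratio ln_ratio_eq // => h0 hu.
  by apply: Rinv_le_contravar; lra.
Qed.

Lemma log_weight_telescope j : (37 + j <= n)%N ->
  36 * log_weight y (37 + j) <= inv_ln_ratio y (37 + j) - inv_ln_ratio y j.+1.
Proof.
  move=> hj; have hu := logT_le_ln_ratio (37 + j) ltac:(lia); have := logT_ge => hL.
  have e : INR j.+1 = INR (37 + j) - 36 by rewrite plus_INR S_INR INR_IZR_INZ /=; ring.
  rewrite /log_weight /inv_ln_ratio e; apply: inv_ln_gap36; [ | exact: y_gt0 | lra].
  by rewrite plus_INR INR_IZR_INZ /=; have := pos_INR j; lra.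
Qed.

(* Each [m > 36] is paid for by the drop of [inv_ln_ratio] between [m - 36] and
   [m], which carry the same weight by periodicity. *)
Lemma sieve_sum4_telescope j : (36 + j <= n)%N ->
  \big[Rplus/0]_(1 <= m < (36 + j).+1) (sieve_weight 4 m * log_weight y m)
    + / 36 * \big[Rplus/0]_(1 <= m < 37) (sieve_weight 4 m * inv_ln_ratio y m)
  <= \big[Rplus/0]_(1 <= m < 37) (sieve_weight 4 m * log_weight y m)
    + / 36 * \big[Rplus/0]_(j.+1 <= m < j + 37) (sieve_weight 4 m * inv_ln_ratio y m).
Proof.
  elim: j => [|j IH] hj; first by right.
  have {}IH := IH ltac:(lia).
  set Wf := fun m => sieve_weight 4 m * log_weight y m.
  set WF := fun m => sieve_weight 4 m * inv_ln_ratio y m.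
  have e1 : \big[Rplus/0]_(1 <= m < (36 + j.+1).+1) Wf m
            = \big[Rplus/0]_(1 <= m < (36 + j).+1) Wf m + Wf (37 + j)%N.
  { have -> : ((36 + j.+1).+1 = (36 + j).+2)%N by lia.
    by rewrite big_nat_recr //= -addSn. }
  have e2 : \big[Rplus/0]_(j.+1 <= m < j + 37) WF m + WF (37 + j)%N
            = WF j.+1 + \big[Rplus/0]_(j.+2 <= m < j.+1 + 37) WF m.
  { have -> : (j.+1 + 37 = (j + 37).+1)%N by lia.
    rewrite -big_ltn ?big_nat_recr //=; try lia.
    by rewrite addnC. }
  have eW : sieve_weight 4 (37 + j) = sieve_weight 4 j.+1.
  { have -> : (37 + j = j.+1 + 36)%N by lia.
    exact: sieve_weight4_period. }
  have hw := sieve_weight_ge0 4 j.+1.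
  have := Rmult_le_compat_l _ _ _ hw (log_weight_telescope j ltac:(lia)).
  rewrite /Wf /WF /= eW in e1 e2 IH *; lra.
Qed.

Lemma sieve_sum4_le_period_sum : sieve_sum 4 y n <= period_sum / (36 * logT).
Proof.
  have hL := logT_ge; have hl := logT_le_ln; have hO : 0 <= period_sum.
  { by apply: sum_nat_ge0 => m _; apply: sieve_weight_ge0. }
  have hlogT : period_sum / (36 * ln y) <= period_sum / (36 * logT).
  { by apply: Rmult_le_compat_l => //; apply: Rinv_le_contravar; lra. }
  case: (leqP n 36) => hn.
  { by have := initial_sum_le n hn (leqnn n); rewrite /sieve_sum; lra. }
  have -> : n = (36 + (n - 36))%N by lia.
  set j := (n - 36)%N; have hj : (36 + j <= n)%N by lia.
  have := sieve_sum4_telescope j hj; have := initial_sum_le 36 (leqnn 36) ltac:(lia).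
  have hwin : \big[Rplus/0]_(j.+1 <= m < j + 37) (sieve_weight 4 m * inv_ln_ratio y m)
              <= / logT * period_sum.
  { rewrite /period_sum -(sum_window_periodic 36 _ isT sieve_weight4_period j) big_distrr.
    apply: sum_nat_le => m hm; rewrite Rmult_comm /=.
    by apply: Rmult_le_compat_r; [apply: sieve_weight_ge0 | apply: inv_ln_ratio_le; lia]. }
  have hinit : / ln y * period_sum
               <= \big[Rplus/0]_(1 <= m < 37) (sieve_weight 4 m * inv_ln_ratio y m).
  { rewrite /period_sum big_distrr; apply: sum_nat_le => m hm; rewrite Rmult_comm /=.
    by apply: Rmult_le_compat_r; [apply: sieve_weight_ge0 | apply: inv_ln_ratio_ge; lia]. }
  have e1 : period_sum / (36 * logT) = / 36 * (/ logT * period_sum) by field; lra.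
  have e2 : period_sum / (36 * ln y) = / 36 * (/ ln y * period_sum) by field; lra.
  rewrite /sieve_sum; lra.
Qed.

End SieveBySmallPrimes.

Lemma sieve_sum4_le y n : INR n * 10 ^ 12 <= y -> sieve_sum 4 y n <= period_sum / (36 * logT).
Proof.
  case: n => [|n] h; last exact: sieve_sum4_le_period_sum.
  rewrite /sieve_sum big_geq //; have := logT_ge => hL.
  apply: Rmult_le_pos; last by apply/Rlt_le/Rinv_0_lt_compat; lra.
  by apply: sum_nat_ge0 => m _; apply: sieve_weight_ge0.
Qed.

(* [b >= p^(1/logT)] is certified by [p <= b^27], since [logT >= 27]. *)
Lemma local_excess_div_le_of_pow (p : nat) (b c : R) : (2 < p)%N -> 0 < b -> b < INR p ->
  INR p <= b ^ 27 ->
  (INR p - 1) * INR p - (INR p - b) ^ 2 <= c * INR p * (INR p - b) ^ 2 ->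
  local_excess p / INR p <= c.
Proof.
  move=> hp hb hbp hpow hpoly; have hp1 : 1 <= INR p by apply: (INR_leq 1); lia.
  apply: (Rle_trans _ _ _ (local_excess_div_le p b hp hbp (t_eps_le _ _ hp1 hb hpow))).
  by apply: Rdiv_le_of_le_mul; [apply: Rmult_lt_0_compat; [lra | apply: pow_lt; lra] | lra].
Qed.

Lemma one_plus_mul_le a b c d : 0 <= a <= b -> 1 <= c <= d -> 1 <= (1 + a) * c <= (1 + b) * d.
Proof. by move=> [h1 h2] [h3 h4]; split; nra. Qed.

Ltac excess_bound p bn bd :=
  split; [apply: local_excess_div_ge0; done
         | apply: (local_excess_div_le_of_pow p (IZR bn / IZR bd));
           [done | lra | simpl; lra
           | rewrite INR_IZR_INZ; apply: (IZR_le_ratio_pow bn bd _ 27); [lia | by vm_compute]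
           | simpl; lra]].

Lemma euler_factor_50 : euler_factor 50 <= 11269 / 10000.
Proof.
  have k5 : 0 <= local_excess 5 / INR 5 <= 5787 / 100000 by excess_bound 5%N 2123%Z 2000%Z.
  have k7 : 0 <= local_excess 7 / INR 7 <= 561 / 20000 by excess_bound 7%N 2687%Z 2500%Z.
  have k11 : 0 <= local_excess 11 / INR 11 <= 549 / 50000 by excess_bound 11%N 10929%Z 10000%Z.
  have k13 : 0 <= local_excess 13 / INR 13 <= 391 / 50000 by excess_bound 13%N 10997%Z 10000%Z.
  have k17 : 0 <= local_excess 17 / INR 17 <= 57 / 12500 by excess_bound 17%N 11107%Z 10000%Z.
  have k19 : 0 <= local_excess 19 / INR 19 <= 73 / 20000 by excess_bound 19%N 11153%Z 10000%Z.
  have k23 : 0 <= local_excess 23 / INR 23 <= 249 / 100000 by excess_bound 23%N 702%Z 625%Z.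
  have k29 : 0 <= local_excess 29 / INR 29 <= 79 / 50000 by excess_bound 29%N 11329%Z 10000%Z.
  have k31 : 0 <= local_excess 31 / INR 31 <= 69 / 50000 by excess_bound 31%N 11357%Z 10000%Z.
  have k37 : 0 <= local_excess 37 / INR 37 <= 49 / 50000 by excess_bound 37%N 11431%Z 10000%Z.
  have k41 : 0 <= local_excess 41 / INR 41 <= 1 / 1250 by excess_bound 41%N 459%Z 400%Z.
  have k43 : 0 <= local_excess 43 / INR 43 <= 73 / 100000 by excess_bound 43%N 2299%Z 2000%Z.
  have k47 : 0 <= local_excess 47 / INR 47 <= 61 / 100000 by excess_bound 47%N 11533%Z 10000%Z.
  rewrite /euler_factor -big_filter.
  have -> : [seq p <- index_iota 5 51 | prime p]
            = [:: 5; 7; 11; 13; 17; 19; 23; 29; 31; 37; 41; 43; 47]%N by vm_compute.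
  rewrite !big_cons big_nil; eapply Rle_trans; first apply: proj2.
  - by repeat (eapply one_plus_mul_le; first eassumption); split; apply: Rle_refl.
  - lra.
Qed.

Lemma Rpower_telescope (a t : R) : 0 < a -> 1 < t ->
  Rpower t (- (1 + a)) <= / a * (Rpower (t - 1) (- a) - Rpower t (- a)).
Proof.
  move=> ha ht; rewrite /Rpower.
  set X := exp (- a * ln t); have hX : 0 < X by apply: exp_pos.
  have -> : exp (- (1 + a) * ln t) = X / t.
  { rewrite /X (_ : - (1 + a) * ln t = - a * ln t + - ln t); last ring.
    by rewrite exp_plus exp_Ropp exp_ln //; lra. }
  have -> : exp (- a * ln (t - 1)) = X * exp (a * (ln t - ln (t - 1))).
  { by rewrite /X -exp_plus; f_equal; ring. }
  have hg := ln_sub_ge (t - 1) t ltac:(lra) ltac:(lra).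
  rewrite (_ : t - (t - 1) = 1) in hg; last ring.
  have := exp_ineq1_le (a * (ln t - ln (t - 1))) => he.
  have : X * (1 + a * (1 / t)) <= X * exp (a * (ln t - ln (t - 1))).
  { by apply: Rmult_le_compat_l; [lra | apply: (Rle_trans _ _ _ _ he); nra]. }
  rewrite (_ : X / t = / a * (X * (1 + a * (1 / t)) - X)); last by field; lra.
  by move=> h; apply: Rmult_le_compat_l; [apply/Rlt_le/Rinv_0_lt_compat | ]; lra.
Qed.

Lemma sum_Rpower_le (a : R) (N P : nat) : 0 < a -> (0 < N <= P)%N ->
  \big[Rplus/0]_(N.+1 <= n < P.+1) Rpower (INR n) (- (1 + a))
    <= / a * (Rpower (INR N) (- a) - Rpower (INR P) (- a)).
Proof.
  move=> ha /andP [N0]; elim: P => [|P IH]; first by rewrite leqn0 => /eqP N0'; rewrite N0' in N0.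
  rewrite leq_eqVlt ltnS => /orP [/eqP <- | hNP]; first by rewrite big_geq //; lra.
  rewrite sum_nat_recr; last lia.
  have := Rpower_telescope a (INR P.+1) ha.
  rewrite S_INR Rplus_minus_r => h; have := IH hNP.
  have := INR_leq 1 P ltac:(lia); rewrite /= => hP.
  by have := h ltac:(lra); lra.
Qed.

Definition tail_ratio : R := 289 / 12500.
Definition tail_const : R := 2 / (1 - tail_ratio) ^ 2.

(* [50^(1/logT) <= 289/250]. *)
Lemma Rpower_neg_xi_le p : (50 <= p)%N -> Rpower (INR p) (- xi) <= tail_ratio.
Proof.
  move=> p50; have h50 : INR 50 = 50 by rewrite INR_IZR_INZ.
  have hp : 50 <= INR p by rewrite -h50; apply: INR_leq.
  apply: (Rle_trans _ (Rpower 50 (- xi))).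
  { apply: exp_le_exp; have := xi_ge => hxi.
    have : ln 50 <= ln (INR p) by apply: ln_le_ln; lra.
    by nra. }
  rewrite Rpower_neg_xi; last lra.
  have : t_eps 50 <= 289 / 250.
  { apply: t_eps_le; [lra | lra | ].
    by apply: (IZR_le_ratio_pow 289 250 50 27); [lia | vm_compute]. }
  by rewrite /tail_ratio; lra.
Qed.

Lemma local_excess_div_le_tail (p : nat) : (50 <= p)%N ->
  local_excess p / INR p <= tail_const * Rpower (INR p) (- (1 + xi)).
Proof.
  move=> p50; have hp := INR_leq 50 p p50; rewrite (INR_IZR_INZ 50) /= in hp.
  set E := t_eps (INR p).
  have hE1 : 1 <= E by apply: t_eps_ge1; lra.
  have hEp : E <= tail_ratio * INR p.
  { have := Rpower_neg_xi_le p p50; rewrite Rpower_neg_xi; last lra.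
    rewrite -/E => h; rewrite (_ : E = E / INR p * INR p); last by field; lra.
    by apply: Rmult_le_compat_r; lra. }
  have hpE : 0 < INR p - E by rewrite /tail_ratio in hEp; lra.
  apply: (Rle_trans _ _ _ (local_excess_div_le p E ltac:(lia) ltac:(lra) (Rle_refl _))).
  have -> : tail_const * Rpower (INR p) (- (1 + xi)) = 2 * E / (INR p * (1 - tail_ratio)) ^ 2.
  { rewrite Ropp_plus_distr Rpower_plus Rpower_neg_xi ?Rpower_Ropp ?Rpower_1; try lra.
    by rewrite -/E /tail_const /tail_ratio; field; repeat split; lra. }
  apply: (Rle_trans _ (2 * E / (INR p - E) ^ 2)).
  { apply: Rdiv_le_of_le_mul; first by apply: Rmult_lt_0_compat; [lra | apply: pow_lt].
    rewrite (_ : 2 * E / (INR p - E) ^ 2 * (INR p * (INR p - E) ^ 2) = 2 * INR p * E); last by field; lra.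
    by nra. }
  apply: Rmult_le_compat_l; first lra.
  apply: Rinv_le_contravar; first by apply: pow_lt; rewrite /tail_ratio; nra.
  by apply: pow_incr; rewrite /tail_ratio in hEp *; split; nra.
Qed.

Definition excess_tail_sum (P : nat) : R :=
  \big[Rplus/0]_(51 <= p < P.+1) (if prime p then local_excess p / INR p else 0).

Lemma excess_tail_sum_ge0 P : 0 <= excess_tail_sum P.
Proof.
  apply: sum_nat_ge0 => p /andP [hp _]; case: ifP => _; last lra.
  by apply: local_excess_div_ge0; lia.
Qed.

Lemma excess_tail_sum_le P : (50 <= P)%N -> excess_tail_sum P <= 51 / 1000.
Proof.
  move=> hP; have hxi := xi_ge; have hc : 0 <= tail_const.
  { by apply: Rmult_le_pos; [lra | apply/Rlt_le/Rinv_0_lt_compat/pow_lt; rewrite /tail_ratio; lra]. }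
  apply: (Rle_trans _ (tail_const * \big[Rplus/0]_(51 <= n < P.+1) Rpower (INR n) (- (1 + xi)))).
  { rewrite big_distrr; apply: sum_nat_le => p /andP [hp _] /=; case: ifP => _.
    - by apply: local_excess_div_le_tail; lia.
    - by apply: Rmult_le_pos => //; apply/Rlt_le/exp_pos. }
  have := sum_Rpower_le xi 50 P ltac:(lra) ltac:(lia).
  have := Rpower_neg_xi_le 50 (leqnn 50); have := exp_pos (- xi * ln (INR P)).
  rewrite /Rpower => h1 h2 h3.
  have hia : / xi <= 27 / 26.
  { by rewrite (_ : 27 / 26 = / (26 / 27)); [apply: Rinv_le_contravar; lra | field]. }
  have hia0 : 0 < / xi by apply: Rinv_0_lt_compat; lra.
  have : / xi * (exp (- xi * ln (INR 50)) - exp (- xi * ln (INR P))) <= 27 / 26 * tail_ratio.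
  { apply: (Rle_trans _ (/ xi * tail_ratio)); first by apply: Rmult_le_compat_l; lra.
    by apply: Rmult_le_compat_r; rewrite /tail_ratio; lra. }
  move=> h4; have := Rmult_le_compat_l _ _ _ hc h3; have := Rmult_le_compat_l _ _ _ hc h4.
  by rewrite /tail_const /tail_ratio; lra.
Qed.

(* [(1 + k) (1 - (s + k)) <= 1 - s] for [k, s >= 0]. *)
Lemma euler_factor_tail P : (50 <= P)%N ->
  euler_factor P * (1 - excess_tail_sum P) <= euler_factor 50.
Proof.
  elim: P => [|P IH] // hP; case: (leqP P 49) => h.
  { have -> : P.+1 = 50%N by lia.
    by rewrite /excess_tail_sum big_geq //; lra. }
  have {}IH := IH ltac:(lia).
  have hT := excess_tail_sum_ge0 P; have hK := euler_factor_ge1 P.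
  rewrite euler_factor_succ /excess_tail_sum sum_nat_recr -/(excess_tail_sum P); last lia.
  case: (boolP (prime P.+1)) => pp; last by rewrite andFb Rmult_1_r Rplus_0_r.
  rewrite andTb (_ : (5 <= P.+1)%N); last lia.
  have := local_excess_div_ge0 P.+1 ltac:(lia); set k := local_excess P.+1 / INR P.+1 => hk.
  have : 0 <= euler_factor P * (k * excess_tail_sum P + k * k) by apply: Rmult_le_pos; nra.
  nra.
Qed.

Lemma euler_factor_le P : euler_factor P <= 11269 / 10000 / (1 - 51 / 1000).
Proof.
  have h50 := euler_factor_50; have hK := euler_factor_ge1 P.
  apply: Rle_div_of_mul_le; first lra.
  case: (leqP 50 P) => h.
  - have := excess_tail_sum_le P h; have := euler_factor_tail P h.
    move=> ht hT.
    have : euler_factor P * (1 - 51 / 1000) <= euler_factor P * (1 - excess_tail_sum P).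
    { by apply: Rmult_le_compat_l; lra. }
    lra.
  - by have := euler_factor_mono P 50 ltac:(lia); nra.
Qed.

Definition squarefree (d : nat) : bool := all (fun p => logn p d == 1)%N (primes d).

Lemma INR_prod (s : seq nat) (f : nat -> nat) :
  INR (\prod_(i <- s) f i)%N = \big[Rmult/1]_(i <- s) INR (f i).
Proof.
  elim: s => [|x s IH]; first by rewrite !big_nil.
  by rewrite !big_cons mult_INR IH.
Qed.

Lemma mobius_sq d : (0 < d)%N -> mobius d ^ 2 = if squarefree d then 1 else 0.
Proof.
  move=> d0; rewrite /mobius d0 /squarefree; case: (all _ _); last by rewrite /=; ring.
  rewrite -pow_mult.
  have -> : (size (primes d) * 2)%coq_nat = (2 * size (primes d))%coq_nat by lia.
  exact: pow_1_even.
Qed.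

Lemma sieve_weight_squarefree P d : (0 < d)%N -> (d <= P)%N -> squarefree d ->
  sieve_weight P d = \big[Rmult/1]_(q <- primes d) local_factor q.
Proof.
  move=> d0 dP /allP sq; apply: eq_big_seq => q qin.
  rewrite /local_weight (eqP (sq q qin)) eqxx (leq_trans _ dP) //.
  by apply: dvdn_leq => //; move: qin; rewrite mem_primes => /and3P [].
Qed.

Lemma sieve_weight_not_squarefree P d : (0 < d)%N -> (d <= P)%N -> ~~ squarefree d ->
  sieve_weight P d = 0.
Proof.
  move=> d0 dP /allPn [q qin hq].
  have qP : (q <= P)%N.
  { by apply: leq_trans dP; apply: dvdn_leq => //; move: qin; rewrite mem_primes => /and3P []. }
  by rewrite /sieve_weight (big_rem _ qin) /= /local_weight qP (negbTE hq) Rmult_0_l.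
Qed.

Lemma local_factor_prod d : (0 < d)%N -> squarefree d ->
  \big[Rmult/1]_(q <- primes d) local_factor q * INR d = phiR d * g1 d ^ 2.
Proof.
  move=> d0 /allP sq.
  have ephi : phiR d = \big[Rmult/1]_(q <- primes d) (INR q - 1).
  { rewrite /phiR totientE // INR_prod; apply: eq_big_seq => q qin.
    rewrite (eqP (sq q qin)) /= muln1.
    have q0 : (0 < q)%N by move: qin; rewrite mem_primes => /and3P [/prime_gt0].
    by rewrite -{2}(prednK q0) S_INR; ring. }
  have eg : g1 d = \big[Rmult/1]_(q <- primes d) g1p q.
  { by apply: eq_big_seq => q qin; rewrite (eqP (sq q qin)) pow_1. }
  have ed : INR d = \big[Rmult/1]_(q <- primes d) INR q.
  { rewrite {1}(prod_prime_decomp d0) prime_decompE big_map INR_prod.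
    by apply: eq_big_seq => q qin; rewrite (eqP (sq q qin)) expn1. }
  rewrite ephi eg ed.
  have -> : forall a : R, a ^ 2 = a * a by move=> a; ring.
  rewrite -!big_split; apply: eq_big_seq => q qin /=.
  have q0 : 0 < INR q by apply: INR_gt0; move: qin; rewrite mem_primes => /and3P [/prime_gt0].
  by rewrite /local_factor; field; lra.
Qed.

Lemma term_eq_sieve_weight x P d : (0 < d)%N -> (d <= P)%N -> ln (x / INR d) <> 0 ->
  term x d = sieve_weight P d * log_weight x d.
Proof.
  move=> d0 dP hl; have hd := INR_gt0 d d0; have hl2 := pow_nonzero _ 2 hl.
  rewrite /term /log_weight mobius_sq //; case: (boolP (squarefree d)) => sq.
  - have e := local_factor_prod d d0 sq.
    rewrite sieve_weight_squarefree // (_ : \big[Rmult/1]_(q <- primes d) local_factor q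
                                            = phiR d * g1 d ^ 2 / INR d).
    + by field; split; lra.
    + by rewrite -e; field; lra.
  - by rewrite sieve_weight_not_squarefree //; rewrite /Rdiv; ring.
Qed.

Lemma Rleb_true a b : a <= b -> Rleb a b = true.
Proof. by rewrite /Rleb; case: (Rle_dec a b). Qed.

Lemma sum_upto_floor (M : R) (F : nat -> R) : 0 <= M ->
  exists n, INR n <= M /\ sum_upto M F = \big[Rplus/0]_(1 <= d < n.+1) F d.
Proof.
  move=> hM; have [hz1 hz2] := archimed M.
  have z1 : (1 <= up M)%Z.
  { have : (0 < up M)%Z by apply: lt_IZR; lra.
    lia. }
  have hz : INR (Z.to_nat (up M)) = IZR (up M) by rewrite INR_IZR_INZ Z2Nat.id //; lia.
  case ez : (Z.to_nat (up M)) hz => [|n] hz; first by move: ez; lia.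
  have hn : INR n <= M by rewrite S_INR in hz; lra.
  exists n; split=> //; rewrite /sum_upto ez.
  rewrite -(big_mkord (fun d => (0 < d)%N && Rleb (INR d) M) F).
  rewrite big_ltn_cond //= big_nat_cond [in RHS]big_nat_cond; apply: eq_bigl => i.
  case: (boolP ((1 <= i) && (i < _))%N) => //= /andP [i1 i2].
  by rewrite i1 Rleb_true //; apply: (Rle_trans _ _ _ _ hn); apply: INR_leq; lia.
Qed.

Lemma sum_term_eq_sieve_sum x n : INR n * 10 ^ 12 <= x ->
  \big[Rplus/0]_(1 <= d < n.+1) term x d = sieve_sum (maxn n 4) x n.
Proof.
  move=> hx; apply: eq_big_nat => d hd.
  apply: term_eq_sieve_weight; [lia | lia | apply: Rgt_not_eq].
  have hdn : (0 < d <= n)%N by lia.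
  have := logT_le_ln_ratio x n hx d hdn; have := logT_ge; lra.
Qed.

Lemma period_sum_euler_factor_le P : period_sum / (36 * logT) * euler_factor P <= 47 / 1000.
Proof.
  have hL := logT_ge; have hK := euler_factor_le P; have hK1 := euler_factor_ge1 P.
  have h3 := local_factor_3_le; have h30 := local_factor_ge0 3 isT.
  have hO : period_sum <= 37628 / 1000 by rewrite period_sum_eq local_factor_2; nra.
  have hO0 : 0 <= period_sum by rewrite period_sum_eq local_factor_2; nra.
  have h1 : period_sum / (36 * logT) <= period_sum / (36 * 27).
  { by apply: Rmult_le_compat_l => //; apply: Rinv_le_contravar; lra. }
  have : period_sum / (36 * logT) * euler_factor P
         <= period_sum / (36 * 27) * (11269 / 10000 / (1 - 51 / 1000)).
  { apply: Rmult_le_compat; try lra.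
    by apply: Rmult_le_pos => //; apply/Rlt_le/Rinv_0_lt_compat; lra. }
  lra.
Qed.

Theorem mainTheorem7 (x D : R) (hD : 0 <= D) (hxD : D <= x) :
  sum_upto (Rmin D (x / 10 ^ 12)) (term x) <= 47 / 1000.
Proof.
  have hT : 0 < 10 ^ 12 by apply: pow_lt; lra.
  set M := Rmin D (x / 10 ^ 12).
  have hM0 : 0 <= M.
  { by apply: Rmin_glb => //; apply: Rmult_le_pos; [lra | apply/Rlt_le/Rinv_0_lt_compat]. }
  have [n [hn ->]] := sum_upto_floor M (term x) hM0.
  have hnx : INR n * 10 ^ 12 <= x.
  { have := Rle_trans _ _ _ hn (Rmin_r D (x / 10 ^ 12)) => h.
    by rewrite (_ : x = x / 10 ^ 12 * 10 ^ 12); [apply: Rmult_le_compat_r; lra | field; lra]. }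
  rewrite sum_term_eq_sieve_sum //.
  have hC : 0 <= period_sum / (36 * logT).
  { apply: Rmult_le_pos; first by apply: sum_nat_ge0 => m _; apply: sieve_weight_ge0.
    by apply/Rlt_le/Rinv_0_lt_compat; have := logT_ge; lra. }
  apply: Rle_trans (period_sum_euler_factor_le (maxn n 4)).
  apply: (sieve_sum_le_euler_factor _ _ (Rlt_le _ _ hT) hC sieve_sum4_le) => //.
  exact: leq_maxr.
Qed.
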